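(* Let $\mathcal{M}=\langle M,\circ,e\rangle$ be an effective mge monoid and let $\mathcal{T}=\langle\Sigma^*\times\mathcal{M},Q,I,F,\Delta\rangle$ be a trimmed functional monoidal finite-state transducer. If $p\in Q$, $m\in M$ and $\langle p,\langle\varepsilon,m\rangle,p\rangle\in\Delta^*$, then $m=e$.
   Context: A tuple $\langle m_1,\dots,m_n\rangle$ is equalizable if some $\langle x_1,\dots,x_n\rangle$ (an equalizer) satisfies $m_1x_1=\dots=m_nx_n$; an equalizer is a most general equalizer (mge) if every equalizer has the form $\langle x_1x,\dots,x_nx\rangle$, $x\in M$. An mge monoid has right cancellation ($ac=bc\Rightarrow a=b$) and an mge for every equalizable pair; it is effective if elements form a recursive subset of $\mathbb{N}$ with computable operation, equality and equalizability are decidable, a computable function returns an mge of each equalizable pair, and inverses of invertible elements are computable. The transducer has finite $\Delta\subseteq Q\times((\Sigma\cup\{\varepsilon\})\times M)\times Q$; $\Delta^*$ is the generalized transition relation: the least set containing $\langle q,\langle\varepsilon,e\rangle,q\rangle$ for all $q$ and closed under $\langle q_1,\langle u,w\rangle,q_2\rangle\in\Delta^*$, $\langle q_2,\langle a,m\rangle,q_3\rangle\in\Delta\Rightarrow\langle q_1,\langle ua,wm\rangle,q_3\rangle\in\Delta^*$. $L(\mathcal{T})$ is the set of labels of such paths from $I$ to $F$; $\mathcal{T}$ is functional if $L(\mathcal{T})$ is the graph of a partial function; trimmed if every state is reachable from an initial state and can reach a final state. *)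

From mathcomp Require Import all_boot.
Set Implicit Arguments. Unset Strict Implicit. Unset Printing Implicit Defensive.

(* An effective monoid: elements are a recursive (boolean-decidable) subset
   [inM] of nat, with a (computable, i.e. Rocq-definable) operation [op]
   and unit [e]. *)

Section Monoid.
Variables (inM : pred nat) (op : nat -> nat -> nat) (e : nat).

Definition is_monoid : Prop :=
  [/\ inM e,
      (forall a b, inM a -> inM b -> inM (op a b)),
      (forall a b c, inM a -> inM b -> inM c -> op (op a b) c = op a (op b c)),
      (forall a, inM a -> op e a = a) &
      (forall a, inM a -> op a e = a)].

Definition equalizer (a b x y : nat) : Prop :=
  inM x /\ inM y /\ op a x = op b y.

Definition equalizable (a b : nat) : Prop := exists x y, equalizer a b x y.

Definition mge (a b x y : nat) : Prop :=
  equalizer a b x y /\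
  forall x' y', equalizer a b x' y' ->
    exists z, inM z /\ x' = op x z /\ y' = op y z.

Definition right_cancellative : Prop :=
  forall a b c, inM a -> inM b -> inM c -> op a c = op b c -> a = b.

Definition mge_monoid : Prop :=
  [/\ is_monoid, right_cancellative &
      (forall a b, inM a -> inM b -> equalizable a b ->
         exists x y, mge a b x y)].

Definition invertible (a : nat) : Prop :=
  exists b, inM b /\ op a b = e /\ op b a = e.

(* Effectiveness: membership ([inM] is a bool function), the operation and
   equality on nat are computable by construction; in addition we require
   computable witnesses for equalizability, mge's and inverses. *)
Definition effective_mge_monoid : Prop :=
  mge_monoid /\
  (exists eqzb : nat -> nat -> bool,
      forall a b, inM a -> inM b -> (eqzb a b <-> equalizable a b)) /\
  (exists mgef : nat -> nat -> nat * nat,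
      forall a b, inM a -> inM b -> equalizable a b ->
        mge a b (mgef a b).1 (mgef a b).2) /\
  (exists invf : nat -> nat,
      forall a, inM a -> invertible a -> inM (invf a) /\ op a (invf a) = e /\ op (invf a) a = e).
End Monoid.

(* Monoidal finite-state transducer over Sigma^* x M. A transition label
   is (None, m) for (epsilon, m) and (Some a, m) for (a, m). *)
Section Transducer.
Variables (Sigma : finType) (Q : finType) (op : nat -> nat -> nat) (e : nat)
          (Delta : seq (Q * (option Sigma * nat) * Q)).

Definition lbl_word (o : option Sigma) : seq Sigma :=
  if o is Some a then [:: a] else [::].

Inductive delta_star : Q -> seq Sigma * nat -> Q -> Prop :=
  | ds_refl q : delta_star q ([::], e) q
  | ds_step q1 u w q2 a m q3 :
      delta_star q1 (u, w) q2 -> (q2, (a, m), q3) \in Delta ->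
      delta_star q1 (u ++ lbl_word a, op w m) q3.

Variables (I F : {set Q}).

Definition in_lang (u : seq Sigma) (w : nat) : Prop :=
  exists q1 q2, q1 \in I /\ q2 \in F /\ delta_star q1 (u, w) q2.

Definition functional : Prop :=
  forall u w1 w2, in_lang u w1 -> in_lang u w2 -> w1 = w2.

Definition trimmed : Prop :=
  forall q,
    (exists q0 u w, q0 \in I /\ delta_star q0 (u, w) q) /\
    (exists qf u w, qf \in F /\ delta_star q (u, w) qf).
End Transducer.

(* Prolong the loop at p by a path from an initial state to p and a path from
   p to a final state.  Pumping the loop once does not change the input word,
   so by functionality w w' = w m w'; right cancellation gives w = w m, and an
   mge monoid is also left cancellative, whence m = e. *)

From mathcomp Require Import all_boot.

Set Implicit Arguments.
Unset Strict Implicit.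
Unset Printing Implicit Defensive.

Section MgeMonoid.
Variables (inM : pred nat) (op : nat -> nat -> nat) (e : nat).
Hypothesis mgeM : mge_monoid inM op e.

(* Both <e,e> and <b,c> equalize <a,a>; right cancellation forces the two
   components of its mge to coincide. *)
Lemma mge_monoid_left_cancel a b c :
  inM a -> inM b -> inM c -> op a b = op a c -> b = c.
Proof.
case: mgeM => [[inMe _ _ _ _] rcancel mge_ex] Ma Mb Mc abc.
have eqz_aa : equalizable inM op a a by exists e, e.
have [x [y [[Mx [My _]] mge_gen]]] := mge_ex a a Ma Ma eqz_aa.
have [z [Mz [ez1 ez2]]] := mge_gen e e (conj inMe (conj inMe erefl)).
have xy : x = y by apply: (rcancel _ _ z) => //; rewrite -ez1 -ez2.
have [z' [_ [-> ->]]] := mge_gen b c (conj Mb (conj Mc abc)).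
by rewrite xy.
Qed.

End MgeMonoid.

Section DeltaStar.
Variables (inM : pred nat) (op : nat -> nat -> nat) (e : nat).
Variables (Sigma Q : finType) (Delta : seq (Q * (option Sigma * nat) * Q)).
Hypothesis monoidM : is_monoid inM op e.
Hypothesis Delta_inM : forall t, t \in Delta -> inM t.1.2.2.

Lemma delta_star_inM q u w q' : delta_star op e Delta q (u, w) q' -> inM w.
Proof.
case: monoidM => [inMe opM _ _ _].
move E: (u, w) => l path; elim: path u w E.
  by move=> r u w [_ ->].
move=> r1 u w r2 a m r3 _ IH t u' w' [_ ->].
by apply: opM; [exact: (IH u w) | exact: Delta_inM t].
Qed.

Lemma delta_star_cat q1 u w q2 v w' q3 :
  delta_star op e Delta q1 (u, w) q2 -> delta_star op e Delta q2 (v, w') q3 ->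
  delta_star op e Delta q1 (u ++ v, op w w') q3.
Proof.
case: monoidM => [_ _ opA _ ope] path1.
move E: (v, w') => l path2; elim: path2 v w' E path1.
  by move=> r v w' [-> ->] path1; rewrite cats0 ope // (delta_star_inM path1).
move=> r1 v w'' r2 a m r3 path IH t v' w' [-> ->] path1.
rewrite catA -opA //; last first.
- exact: Delta_inM t.
- exact: delta_star_inM path.
- exact: delta_star_inM path1.
exact: ds_step (IH v w'' erefl path1) t.
Qed.

End DeltaStar.

Theorem lemma6 (inM : pred nat) (op : nat -> nat -> nat) (e : nat)
  (Sigma Q : finType) (I F : {set Q})
  (Delta : seq (Q * (option Sigma * nat) * Q)) :
  effective_mge_monoid inM op e ->
  (forall t, t \in Delta -> inM t.1.2.2) ->
  trimmed op e Delta I F ->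
  functional op e Delta I F ->
  forall (p : Q) (m : nat), inM m ->
  delta_star op e Delta p ([::], m) p ->
  m = e.
Proof.
move=> [mgeM _] Delta_inM trim funT p m Mm loop.
have [monoidM rcancel _] := mgeM.
have [inMe opM _ _ ope] := monoidM.
have [[q0 [u [w [q0I to_p]]]] [qf [v [w' [qfF from_p]]]]] := trim p.
have Mw := delta_star_inM monoidM Delta_inM to_p.
have Mw' := delta_star_inM monoidM Delta_inM from_p.
have direct := delta_star_cat monoidM Delta_inM to_p from_p.
have pumped := delta_star_cat monoidM Delta_inM
  (delta_star_cat monoidM Delta_inM to_p loop) from_p.
rewrite cats0 in pumped.
have ww'_wmw' : op w w' = op (op w m) w'.
  by apply: (funT (u ++ v)); exists q0, qf.
have wm : op w e = op w m by rewrite ope //; apply: (rcancel _ _ w') => //; apply: opM.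
by apply: (mge_monoid_left_cancel mgeM Mw).
Qed.
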